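(* Let $S\subset\mathbb{R}^d$ be a nonempty compact convex set with diameter $D:=\sup_{x,y\in S}\|x-y\|$, and let $f$ be differentiable on $S$ with $L$-Lipschitz gradient on $S$ (not necessarily convex). Let $G:=\sup_{x\in S}\|\nabla f(x)\|<\infty$, fix $C\ge\max\{LD^2,\,GD\}$ with $C>0$, and let $f^*:=\inf_{x\in S}f(x)$. Let $\delta\ge0$ and suppose that for every $x\in S$ a vector $g_\delta(x)\in\mathbb{R}^d$ is available with \[ \big|\langle \nabla f(x)-g_\delta(x),\,s-x\rangle\big|\le\delta\quad\text{for all } s\in S. \] Given $x^0\in S$, define iterates for $k=0,1,2,\dots$ by choosing $s^k\in\arg\min_{s\in S}\langle g_\delta(x^k),\,s-x^k\rangle$, setting $\tilde g_k:=\langle g_\delta(x^k),\,x^k-s^k\rangle$, $\overline\alpha_k:=(\tilde g_k-\delta)_+/C$ where $(u)_+:=\max\{u,0\}$, and $x^{k+1}:=x^k+\overline\alpha_k(s^k-x^k)$. Let $\mathcal{G}(x):=\max_{s\in S}\langle\nabla f(x),\,x-s\rangle$ denote the Frank–Wolfe gap. Then for every $K\ge0$, \[ \min_{0\le k\le K}\mathcal{G}(x^k)\le\sqrt{\frac{2C\,(f(x^0)-f^* )}{K+1}}+2\delta . \] In particular, for any $\varepsilon>2\delta$, $\min_{0\le k\le K}\mathcal{G}(x^k)\le\varepsilon$ holds whenever \[ K+1\ge\frac{2C\,(f(x^0)-f^* )}{(\varepsilon-2\delta)^2}. \]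
   Context: $\|\cdot\|$ is the Euclidean norm and $\langle\cdot,\cdot\rangle$ the Euclidean inner product. (In the paper the Frank–Wolfe gap is denoted $G(x)$; here it is written $\mathcal{G}(x)$ to distinguish it from the gradient bound $G$.) *)

From HB Require Import structures.
From mathcomp Require Import all_boot all_order all_algebra.
From mathcomp Require Import all_classical all_reals all_analysis.
Set Implicit Arguments. Unset Strict Implicit. Unset Printing Implicit Defensive.
Import Order.TTheory GRing.Theory Num.Theory.
Import numFieldNormedType.Exports.
Local Open Scope classical_set_scope.
Local Open Scope ring_scope.

Definition inner (R : realType) (d : nat) (u v : 'rV[R]_d) : R :=
  \sum_(i < d) u 0 i * v 0 i.

Definition enorm (R : realType) (d : nat) (u : 'rV[R]_d) : R :=
  Num.sqrt (inner u u).

Definition diam (R : realType) (d : nat) (S : set 'rV[R]_d) : R :=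
  sup [set enorm (x - y) | x in S & y in S].

Definition is_gradient_on (R : realType) (d : nat) (S : set 'rV[R]_d)
  (f : 'rV[R]_d -> R) (grad : 'rV[R]_d -> 'rV[R]_d) : Prop :=
  forall x, S x -> differentiable f x /\ forall v, 'd f x v = inner (grad x) v.

Definition fw_gap (R : realType) (d : nat) (S : set 'rV[R]_d)
  (grad : 'rV[R]_d -> 'rV[R]_d) (x : 'rV[R]_d) : R :=
  sup [set inner (grad x) (x - s) | s in S].

Definition pos_part (R : realType) (u : R) : R := Num.max u 0.

Definition min_upto (R : realType) (a : nat -> R) (K : nat) : R :=
  \big[Num.min/a 0%N]_(0 <= k < K.+1) a k.

From HB Require Import structures.
From mathcomp Require Import all_boot all_order all_algebra.
From mathcomp Require Import all_classical all_reals all_analysis.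
From mathcomp Require Import ring lra.
Import Order.TTheory GRing.Theory Num.Theory.
Import numFieldNormedType.Exports.
Local Open Scope classical_set_scope.
Local Open Scope ring_scope.

(* With the oracle error delta, the Frank-Wolfe direction satisfies
   <grad f(x^k), s^k - x^k> <= -(g~_k - delta), and L |s^k - x^k|^2 <= L D^2 <= C.
   Plugged into the descent lemma for an L-smooth f, the step
   (g~_k - delta)_+ / C, which lies in [0, 1] because g~_k - delta <= G D <= C,
   decreases f by at least (g~_k - delta)_+^2 / (2C).  Telescoping bounds
   sum_{k <= K} (g~_k - delta)_+^2 by 2C (f(x^0) - f^* ), so the smallest
   (g~_k - delta)_+ is at most sqrt(2C (f(x^0) - f^* ) / (K+1)).  The oracle
   bound also shows that the Frank-Wolfe gap at x^k is at most
   g~_k + delta <= (g~_k - delta)_+ + 2 delta. *)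

Section Inner.
Context {R : realType} {d : nat}.
Implicit Types u v w : 'rV[R]_d.

Lemma innerC u v : inner u v = inner v u.
Proof. by apply: eq_bigr => i _; rewrite mulrC. Qed.

Lemma innerDl u v w : inner (u + v) w = inner u w + inner v w.
Proof. by rewrite /inner -big_split; apply: eq_bigr => i _; rewrite mxE mulrDl. Qed.

Lemma innerZl a u w : inner (a *: u) w = a * inner u w.
Proof. by rewrite /inner mulr_sumr; apply: eq_bigr => i _; rewrite mxE mulrA. Qed.

Lemma innerNl u w : inner (- u) w = - inner u w.
Proof. by rewrite -scaleN1r innerZl mulN1r. Qed.

Lemma innerBl u v w : inner (u - v) w = inner u w - inner v w.
Proof. by rewrite innerDl innerNl. Qed.

Lemma innerBr u v w : inner w (u - v) = inner w u - inner w v.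
Proof. by rewrite innerC innerBl !(innerC w). Qed.

Lemma innerZr a u w : inner w (a *: u) = a * inner w u.
Proof. by rewrite innerC innerZl innerC. Qed.

Lemma inner_ge0 u : 0 <= inner u u.
Proof. by apply: sumr_ge0 => i _; rewrite -expr2 sqr_ge0. Qed.

Lemma enorm_ge0 u : 0 <= enorm u.
Proof. exact: sqrtr_ge0. Qed.

Lemma enormZ a u : enorm (a *: u) = `|a| * enorm u.
Proof. by rewrite /enorm innerZl innerZr mulrA -expr2 sqrtrM ?sqr_ge0 // sqrtr_sqr. Qed.

Lemma inner_lagrange u v :
  2 * (inner u u * inner v v - inner u v ^+ 2) =
  \sum_(i < d) \sum_(j < d) (u 0 i * v 0 j - u 0 j * v 0 i) ^+ 2.
Proof.
have sqr_expand i j : (u 0 i * v 0 j - u 0 j * v 0 i) ^+ 2 =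
    (u 0 i * u 0 i) * (v 0 j * v 0 j) + (u 0 j * u 0 j) * (v 0 i * v 0 i)
    - 2 * ((u 0 i * v 0 i) * (u 0 j * v 0 j)) by ring.
under eq_bigr => i _ do under eq_bigr => j _ do rewrite sqr_expand.
rewrite /inner.
under eq_bigr => i _ do rewrite sumrB big_split /= -?mulr_sumr -?mulr_suml -?mulr_sumr.
rewrite sumrB big_split /= -?mulr_suml -?mulr_sumr -?mulr_suml expr2; ring.
Qed.

Lemma inner_cauchy_schwarz u v : `|inner u v| <= enorm u * enorm v.
Proof.
have sqr_le : inner u v ^+ 2 <= inner u u * inner v v.
  have : 0 <= 2 * (inner u u * inner v v - inner u v ^+ 2).
    by rewrite inner_lagrange; do 2![apply: sumr_ge0 => ? _]; exact: sqr_ge0.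
  lra.
by rewrite /enorm -sqrtrM ?inner_ge0 // -sqrtr_sqr ler_sqrt // mulr_ge0 ?inner_ge0.
Qed.

Lemma inner_le_enorm u v : inner u v <= enorm u * enorm v.
Proof. exact: le_trans (ler_norm _) (inner_cauchy_schwarz u v). Qed.

Lemma enorm_le_mx_norm u : enorm u <= Num.sqrt d%:R * `|u|.
Proof.
have entry_le i : `|u 0 i| <= `|u|.
  by rewrite /Num.norm /= mx_normrE; apply: le_trans (le_bigmax _ _ (ord0, i)) => /=.
rewrite -[`|u|]ger0_norm // -sqrtr_sqr -sqrtrM // ler_sqrt ?mulr_ge0 ?sqr_ge0 //.
rewrite -[d in d%:R]card_ord mulr_natl -sumr_const; apply: ler_sum => i _.
by rewrite -expr2 -real_normK ?num_real // lerXn2r ?nnegrE.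
Qed.

End Inner.

Lemma convex_set_segment {R : numDomainType} {E : lmodType R}
    {S : set (convex_lmodType E)} {x y : E} {t : R} :
  convex_set S -> S x -> S y -> 0 <= t <= 1 -> S (x + t *: (y - x)).
Proof.
move=> cvS Sx Sy /andP[t0 t1].
have /set_mem := cvS y x (Itv01 t0 t1) (mem_set Sy) (mem_set Sx).
suff -> : x + t *: (y - x) = t *: y + (1 - t) *: x by [].
by rewrite scalerBr scalerBl scale1r addrC (addrC x) addrA.
Qed.

Lemma is_derive_along {R : realType} {V W : normedModType R} {f : V -> W}
    {x v : V} {t : R} :
  differentiable f (x + t *: v) ->
  is_derive t 1 (fun r : R => f (x + r *: v)) ('d f (x + t *: v) v).
Proof.
move=> df.
have quot : (fun h : R => h^-1 *: (f (x + (h *: 1 + t) *: v) - f (x + t *: v))) =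
            (fun h : R => h^-1 *: (f (h *: v + (x + t *: v)) - f (x + t *: v))).
  by apply: funext => h; rewrite [h *: 1]mulr1 scalerDl addrCA (addrC x) addrA.
apply: DeriveDef; first by rewrite /derivable quot; exact: diff_derivable.
by rewrite /derive quot -deriveE.
Qed.

Lemma is_derive_quadratic {R : realType} (A B t : R) :
  is_derive t 1 (fun r : R => r * A + r ^+ 2 * B) (A + 2 * t * B).
Proof.
have -> : (fun r : R => r * A + r ^+ 2 * B) = A *: id + B *: id ^+ 2.
  by apply: funext => r /=; rewrite mulrC [_ * B]mulrC.
by apply: is_derive_eq; rewrite /= /GRing.scale /=; ring.
Qed.

Lemma gradient_lipschitz_upper_bound {R : realType} {d : nat} {S : set 'rV[R]_d}
    {f : 'rV[R]_d -> R} {grad : 'rV[R]_d -> 'rV[R]_d} {L : R} {x v : 'rV[R]_d} :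
  is_gradient_on S f grad ->
  (forall y z, S y -> S z -> enorm (grad y - grad z) <= L * enorm (y - z)) ->
  (forall t : R, 0 <= t <= 1 -> S (x + t *: v)) ->
  f (x + v) <= f x + inner (grad x) v + L / 2 * enorm v ^+ 2.
Proof.
move=> grad_f grad_lip Sxv.
(* The mean value theorem for psi, whose derivative is <= 0 by the Lipschitz bound. *)
set A := inner (grad x) v; set B := L / 2 * enorm v ^+ 2.
pose psi t := f (x + t *: v) - (t * A + t ^+ 2 * B).
pose dpsi t := inner (grad (x + t *: v)) v - (A + 2 * t * B).
have psi_derive (t : R) : 0 <= t <= 1 -> is_derive t 1 psi (dpsi t).
  move=> /Sxv /grad_f [df dv]; rewrite /dpsi -dv.
  exact: is_deriveB (is_derive_along df) (is_derive_quadratic A B t).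
have Sx : S x by have := Sxv 0; rewrite scale0r addr0 lexx ler01; apply.
have [c c01 psi_mvt] : exists2 c, c \in `[0, 1] & psi 1 - psi 0 = dpsi c * (1 - 0).
  apply: MVT_segment => // [t|].
    by rewrite in_itv /= => /andP[t0 t1]; apply: psi_derive; rewrite !ltW.
  apply: derivable_within_continuous => t; rewrite in_itv /= => t01.
  by have [] := psi_derive t t01.
rewrite in_itv /= in c01; have /andP[c0 _] := c01.
have dpsi_le0 : dpsi c <= 0.
  have lip : inner (grad (x + c *: v) - grad x) v <= L * (c * enorm v) * enorm v.
    apply: le_trans (inner_le_enorm _ _) (ler_wpM2r (enorm_ge0 _) _).
    by have := grad_lip _ _ (Sxv c c01) Sx; rewrite (addrC x) addrK enormZ ger0_norm.
  have quad : L * (c * enorm v) * enorm v = 2 * c * B by rewrite /B expr2; field.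
  move: lip; rewrite innerBl quad -/A /dpsi; lra.
move: psi_mvt; rewrite /psi !scale1r scale0r addr0 expr0n /= !mul0r subr0 mulr1 expr1n mul1r.
lra.
Qed.

Lemma compact_diam_has_ubound {R : realType} {d : nat} {S : set 'rV[R]_d} :
  compact S -> has_ubound [set enorm (x - y) | x in S & y in S].
Proof.
move=> /compact_bounded [M [_ /(_ (M + 1))]]; rewrite ltrDl ltr01 => /(_ isT) SM.
exists (Num.sqrt d%:R * ((M + 1) + (M + 1))) => _ [x Sx [y Sy <-]].
apply: le_trans (enorm_le_mx_norm _) (ler_wpM2l (sqrtr_ge0 _) _).
exact: le_trans (ler_normB _ _) (lerD (SM _ Sx) (SM _ Sy)).
Qed.

Lemma gradient_on_continuous {R : realType} {d : nat} {S : set 'rV[R]_d}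
    {f : 'rV[R]_d -> R} {grad : 'rV[R]_d -> 'rV[R]_d} :
  is_gradient_on S f grad -> {within S, continuous f}.
Proof.
move=> grad_f; apply: continuous_in_subspaceT => y /set_mem Sy.
exact: differentiable_continuous (grad_f y Sy).1.
Qed.

Lemma pos_part_ge0 {R : realType} (u : R) : 0 <= pos_part u.
Proof. by rewrite le_max lexx orbT. Qed.

Lemma pos_part_ge {R : realType} (u : R) : u <= pos_part u.
Proof. by rewrite le_max lexx. Qed.

Lemma pos_part_le {R : realType} (u v : R) : u <= v -> 0 <= v -> pos_part u <= v.
Proof. by move=> uv v0; rewrite ge_max uv. Qed.

Lemma pos_partM {R : realType} (u : R) : pos_part u * u = pos_part u ^+ 2.
Proof. by rewrite /pos_part expr2; case: leP => u0; rewrite ?max_r ?max_l ?ltW // !mul0r. Qed.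

Lemma min_upto_le_sqrt_mean {R : realType} {a b : nat -> R} {c B : R} {K : nat} :
  (forall k, 0 <= b k) -> (forall k, a k <= b k + c) ->
  \sum_(k < K.+1) b k ^+ 2 <= B -> min_upto a K <= Num.sqrt (B / K.+1%:R) + c.
Proof.
move=> b_ge0 ab sumB.
have [j _ jmin] := @arg_minP _ _ 'I_K.+1 ord0 xpredT (fun k => b k) isT.
have bj2 : K.+1%:R * b j ^+ 2 <= B.
  apply: le_trans sumB; rewrite -[K.+1 in X in X * _]card_ord mulr_natl -sumr_const.
  by apply: ler_sum => k _; rewrite !expr2 ler_pM ?b_ge0 ?jmin.
have bj : b j <= Num.sqrt (B / K.+1%:R).
  rewrite -(ger0_norm (b_ge0 j)) -sqrtr_sqr ler_sqrt; first by rewrite ler_pdivlMr // mulrC.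
  by apply: divr_ge0 => //; apply: le_trans bj2; rewrite mulr_ge0 ?sqr_ge0.
have aj : min_upto a K <= a j.
  by apply: ge_bigmin_seq; rewrite // mem_index_iota ltn_ord.
by apply: le_trans aj (le_trans (ab j) _); rewrite lerD2r.
Qed.

Lemma sqrtr_div_le {R : realType} {B e n : R} :
  0 < e -> 0 < n -> B / e ^+ 2 <= n -> Num.sqrt (B / n) <= e.
Proof.
move=> e_gt0 n_gt0; rewrite ler_pdivrMr ?exprn_gt0 // => Ben.
rewrite -(ger0_norm (ltW e_gt0)) -sqrtr_sqr ler_sqrt ?sqr_ge0 //.
by rewrite ler_pdivrMr // mulrC.
Qed.

Section InexactFrankWolfe.
Context {R : realType} {d : nat} {S : set 'rV[R]_d} {f : 'rV[R]_d -> R}.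
Context {grad g : 'rV[R]_d -> 'rV[R]_d} {L C D G delta fstar : R}.
Context {x s : nat -> 'rV[R]_d}.

Hypothesis S_convex : convex_set (S : set (convex_lmodType 'rV[R]_d)).
Hypothesis grad_f : is_gradient_on S f grad.
Hypothesis L_ge0 : 0 <= L.
Hypothesis grad_lip :
  forall y z, S y -> S z -> enorm (grad y - grad z) <= L * enorm (y - z).
Hypothesis diam_le : forall y z, S y -> S z -> enorm (y - z) <= D.
Hypothesis grad_le : forall y, S y -> enorm (grad y) <= G.
Hypothesis C_gt0 : 0 < C.
Hypothesis LD2_le : L * D ^+ 2 <= C.
Hypothesis GD_le : G * D <= C.
Hypothesis oracle : forall y z, S y -> S z -> `|inner (grad y - g y) (z - y)| <= delta.
Hypothesis fstar_le : forall y, S y -> fstar <= f y.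
Hypothesis x0_in : S (x 0%N).
Hypothesis s_in : forall k, S (s k).
Hypothesis s_min :
  forall k z, S z -> inner (g (x k)) (s k - x k) <= inner (g (x k)) (z - x k).

Let gap_est k := pos_part (inner (g (x k)) (x k - s k) - delta).

Hypothesis x_next : forall k, x k.+1 = x k + (gap_est k / C) *: (s k - x k).

Lemma oracle_inner {y z} : S y -> S z ->
  inner (g y) (y - z) - delta <= inner (grad y) (y - z) <= inner (g y) (y - z) + delta.
Proof.
move=> Sy Sz; have := oracle _ _ Sy Sz.
by rewrite innerBl !innerBr ler_norml => /andP[? ?]; apply/andP; split; lra.
Qed.

Lemma gap_est_ge0 k : 0 <= gap_est k.
Proof. exact: pos_part_ge0. Qed.

Lemma gap_est_le {k} : S (x k) -> gap_est k <= C.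
Proof.
move=> Sxk; apply: pos_part_le; last exact: ltW.
have /andP[lower _] := oracle_inner Sxk (s_in k).
apply: le_trans lower (le_trans (inner_le_enorm _ _) (le_trans _ GD_le)).
by rewrite ler_pM ?enorm_ge0 ?grad_le ?diam_le.
Qed.

Lemma fw_step_in01 {k} : S (x k) -> 0 <= gap_est k / C <= 1.
Proof.
move=> Sxk; apply/andP; split; first by rewrite divr_ge0 ?gap_est_ge0 ?ltW.
by rewrite (ler_pdivrMr _ _ C_gt0) mul1r gap_est_le.
Qed.

Lemma fw_iterate_in k : S (x k).
Proof.
elim: k => // k Sxk; rewrite x_next.
exact: convex_set_segment S_convex Sxk (s_in k) (fw_step_in01 Sxk).
Qed.

Lemma fw_decrease k : gap_est k ^+ 2 <= 2 * C * (f (x k) - f (x k.+1)).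
Proof.
have Sxk := fw_iterate_in k.
set P := gap_est k; set a := P / C; set v := s k - x k.
have /andP[a0 a1] : 0 <= a <= 1 := fw_step_in01 Sxk.
have segment_in (t : R) : 0 <= t <= 1 -> S (x k + t *: (a *: v)).
  case/andP=> t0 t1; rewrite scalerA.
  by apply: convex_set_segment S_convex Sxk (s_in k) _; rewrite mulr_ge0 // mulr_ile1.
have := gradient_lipschitz_upper_bound grad_f grad_lip segment_in.
rewrite -x_next innerZr enormZ ger0_norm // => upper.
have slope : a * inner (grad (x k)) v <= - (P ^+ 2 / C).
  have /andP[lower _] := oracle_inner Sxk (s_in k).
  have hv : inner (grad (x k)) v <= - (inner (g (x k)) (x k - s k) - delta).
    by move: lower; rewrite /v !innerBr; lra.
  apply: le_trans (ler_wpM2l a0 hv) _.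
  by rewrite mulrN /a mulrAC pos_partM.
have curvature : L / 2 * (a * enorm v) ^+ 2 <= P ^+ 2 / C / 2.
  have Lv : L * enorm v ^+ 2 <= C.
    have ev := diam_le _ _ (s_in k) Sxk.
    apply: le_trans LD2_le; rewrite ler_wpM2l // lerXn2r ?nnegrE ?enorm_ge0 //.
    exact: le_trans (enorm_ge0 _) ev.
  have -> : L / 2 * (a * enorm v) ^+ 2 = a ^+ 2 / 2 * (L * enorm v ^+ 2) by ring.
  have -> : P ^+ 2 / C / 2 = a ^+ 2 / 2 * C by rewrite /a; field; rewrite gt_eqF.
  by rewrite ler_wpM2l // divr_ge0 ?sqr_ge0.
have -> : P ^+ 2 = 2 * C * (P ^+ 2 / C / 2) by field; rewrite gt_eqF.
rewrite ler_pM2l ?mulr_gt0 //; lra.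
Qed.

Lemma fw_gap_le k : fw_gap S grad (x k) <= gap_est k + 2 * delta.
Proof.
have Sxk := fw_iterate_in k.
apply: ge_sup; first by exists (inner (grad (x k)) (x k - x k)), (x k).
move=> _ [z Sz <-].
have /andP[_ upper] := oracle_inner Sxk Sz.
have est_ge : inner (g (x k)) (x k - s k) - delta <= gap_est k := pos_part_ge _.
by move: upper est_ge (s_min k _ Sz); rewrite !innerBr; lra.
Qed.

Lemma fw_min_gap_le K :
  min_upto (fun k => fw_gap S grad (x k)) K <=
    Num.sqrt (2 * C * (f (x 0%N) - fstar) / K.+1%:R) + 2 * delta.
Proof.
apply: min_upto_le_sqrt_mean gap_est_ge0 fw_gap_le _.
have telescope n : \sum_(k < n) (f (x k) - f (x k.+1)) = f (x 0%N) - f (x n).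
  elim: n => [|n IH]; first by rewrite big_ord0 subrr.
  by rewrite big_ord_recr /= IH addrA subrK.
apply: le_trans (_ : \sum_(k < K.+1) 2 * C * (f (x k) - f (x k.+1)) <= _).
  by apply: ler_sum => k _; exact: fw_decrease.
rewrite -mulr_sumr telescope; apply: ler_wpM2l; first by rewrite mulr_ge0 ?ltW.
by apply: lerB => //; exact/fstar_le/fw_iterate_in.
Qed.

End InexactFrankWolfe.

Theorem theorem2 (R : realType) (d : nat) (S : set 'rV[R]_d)
  (f : 'rV[R]_d -> R) (grad : 'rV[R]_d -> 'rV[R]_d) (L C delta : R)
  (g : 'rV[R]_d -> 'rV[R]_d) (x s : nat -> 'rV[R]_d) :
  S !=set0 -> compact S -> convex_set (S : set (convex_lmodType 'rV[R]_d)) ->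
  is_gradient_on S f grad ->
  0 <= L ->
  (forall y z, S y -> S z -> enorm (grad y - grad z) <= L * enorm (y - z)) ->
  (* G := sup_{x in S} ||grad f(x)|| < oo *)
  has_ubound [set enorm (grad y) | y in S] ->
  0 < C ->
  L * diam S ^+ 2 <= C ->
  sup [set enorm (grad y) | y in S] * diam S <= C ->
  0 <= delta ->
  (forall y z, S y -> S z -> `|inner (grad y - g y) (z - y)| <= delta) ->
  S (x 0%N) ->
  (forall k, S (s k) /\
     forall z, S z -> inner (g (x k)) (s k - x k) <= inner (g (x k)) (z - x k)) ->
  (forall k, x k.+1 =
     x k + (pos_part (inner (g (x k)) (x k - s k) - delta) / C) *: (s k - x k)) ->
  let fstar := inf [set f y | y in S] in
  (forall K : nat,
     min_upto (fun k => fw_gap S grad (x k)) K <=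
       Num.sqrt (2 * C * (f (x 0%N) - fstar) / K.+1%:R) + 2 * delta) /\
  (forall (eps : R) (K : nat), 2 * delta < eps ->
     2 * C * (f (x 0%N) - fstar) / (eps - 2 * delta) ^+ 2 <= K.+1%:R ->
     min_upto (fun k => fw_gap S grad (x k)) K <= eps).
Proof.
move=> S0 cS cvS grad_f L0 grad_lip G_ub C0 LD2 GD _ oracle x0_in s_spec x_next fstar.
have diam_le y z : S y -> S z -> enorm (y - z) <= diam S.
  by move=> Sy Sz; apply: (ub_le_sup (compact_diam_has_ubound cS)); exists y => //; exists z.
have grad_le y : S y -> enorm (grad y) <= sup [set enorm (grad y) | y in S].
  by move=> Sy; apply: (ub_le_sup G_ub); exists y.
have [c _ f_min] := compact_EVT_min S0 cS (gradient_on_continuous grad_f).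
have fstar_le y : S y -> fstar <= f y.
  move=> Sy; apply: ge_inf; last by exists y.
  by exists (f c) => _ [z Sz <-]; apply/f_min/mem_set.
have rate := fw_min_gap_le cvS grad_f L0 grad_lip diam_le grad_le C0 LD2 GD oracle
  fstar_le x0_in (fun k => (s_spec k).1) (fun k => (s_spec k).2) x_next.
split => // eps K eps_gt K_ge; apply: le_trans (rate K) _.
have eps_pos : 0 < eps - 2 * delta by rewrite subr_gt0.
have := sqrtr_div_le eps_pos (ltr0Sn _ K) K_ge; lra.
Qed.
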